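(* Let $T$ be a tournament, let $P=x_0x_1\ldots x_r$ be a path of length $r$ in $T$, and let $z\in V(T)\setminus V(P)$ be a vertex such that every vertex of $\{x_{\alpha+1},x_{\alpha+2},\ldots,x_r\}$ dominates $z$ and $z$ dominates every vertex of $\{x_0,x_1,\ldots,x_\alpha\}$, where $\alpha\in[2,r-3]$. Assume that $T$ contains no $(x_0,x_r)$-path of length $r+1$ whose vertex set is $\{z\}\cup V(P)$. Suppose that $x_sx_t$ is an arc of $T$ with $s\in[\alpha,r-2]$ and $t\in[s+2,r]$, and let $k=\lfloor \frac{1}{2}(t-s)\rfloor$. Then no vertex of $\{x_0,x_1,\ldots,x_{\alpha-1}\}$ dominates a vertex of $\{x_{s+1},x_{s+2},\ldots,x_{s+k}\}$.
   Context: Paths are directed and simple; the length of a path is its number of arcs. A vertex $u$ dominates $v$ if $uv$ is an arc. $[a,b]$ denotes the integers from $a$ to $b$. *)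

From mathcomp Require Import all_boot.
Set Implicit Arguments. Unset Strict Implicit. Unset Printing Implicit Defensive.

(* A tournament on a finite vertex type T, given by its arc relation a:
   a u v means "u dominates v". Loopless, and for distinct u, v exactly one
   of the arcs uv, vu is present. *)
Definition tournament (T : finType) (a : rel T) : Prop :=
  (forall u, ~~ a u u) /\ (forall u v, u != v -> a u v = ~~ a v u).

(* A (directed, simple) path given as the sequence of its vertices:
   nonempty, no repeated vertex, consecutive vertices joined by arcs.
   Its length is (size p).-1. *)
Definition dpath (T : finType) (a : rel T) (p : seq T) : bool :=
  if p is x :: q then path a x q && uniq p else false.

From mathcomp Require Import all_boot.
From mathcomp Require Import zify.

(* Suppose x_i -> x_j with i < alpha and s < j <= s + k.  If x_s -> x_t with
   alpha <= s < j < t, and either j = s+1 or x_(t-1) -> x_(s+1), then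
     x_0 ... x_i  x_j ... x_(t-1)  x_(s+1) ... x_(j-1)  z  x_(i+1) ... x_s  x_t ... x_r
   absorbs z into P.  Otherwise the tournament gives x_(s+1) -> x_(t-1), an arc
   for which j still lies in the first half, so we conclude by induction on j - s.
   Vertex lists are handled through their index lists, with z indexed by r + 1. *)

Set Implicit Arguments.
Unset Strict Implicit.
Unset Printing Implicit Defensive.

Section IotaSegments.

Lemma index_iota_cons m n : m < n -> index_iota m n = m :: index_iota m.+1 n.
Proof. by move=> lt_mn; rewrite /index_iota -(subnSK lt_mn). Qed.

Lemma index_iota_cat m n p :
  m <= n <= p -> index_iota m n ++ index_iota n p = index_iota m p.
Proof.
case/andP=> le_mn le_np; rewrite /index_iota.
have -> : p - m = (n - m) + (p - n) by lia.
by rewrite iotaD subnKC.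
Qed.

Lemma last_index_iota (h m n : nat) : m < n -> last h (index_iota m n) = n.-1.
Proof.
move=> lt_mn; have [d lt_nm_d] := ubnP (n - m).
elim: d h m lt_mn lt_nm_d => // d IHd h m lt_mn lt_nm_d.
rewrite index_iota_cons //=; have [<- | ne_mn] := eqVneq m.+1 n.
  by rewrite /index_iota subnn.
by rewrite IHd //; lia.
Qed.

Variables (T : Type) (e : rel T) (f : nat -> T).

Lemma path_index_iota_from m n rest :
    m < n -> (forall k, m <= k -> k.+1 < n -> e (f k) (f k.+1)) ->
  path (relpre f e) m (index_iota m.+1 n ++ rest) = path (relpre f e) n.-1 rest.
Proof.
move=> lt_mn arc_f; have [d lt_nm_d] := ubnP (n - m).
elim: d m lt_mn arc_f lt_nm_d => // d IHd m lt_mn arc_f lt_nm_d.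
have [<- | ne_mn] := eqVneq m.+1 n; first by rewrite /index_iota subnn.
rewrite index_iota_cons /=; last lia.
rewrite arc_f ?IHd //; try lia.
by move=> k le_mk; apply: arc_f; lia.
Qed.

End IotaSegments.

Section Rerouting.

Variables (T : finType) (a : rel T) (r : nat) (x : nat -> T) (z : T).
Hypothesis x_inj : {in [pred i | i <= r] &, injective x}.
Hypothesis x_arc : forall i, i < r -> a (x i) (x i.+1).
Hypothesis z_notin_x : forall i, i <= r -> z != x i.

Definition xz k := if k <= r then x k else z.

Definition z_absorbable := exists q : seq T,
  [/\ dpath a (x 0 :: q), last (x 0) q = x r, size q = r.+1 &
      [set y | y \in x 0 :: q] = z |: [set x (val i) | i : 'I_r.+1]].

Lemma xz_inj : {in [pred k | k <= r.+1] &, injective xz}.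
Proof.
move=> k l; rewrite !inE /xz => le_k le_l.
case: (leqP k r) => le_kr; case: (leqP l r) => le_lr.
- by apply: x_inj; rewrite inE.
- by move/eqP; rewrite eq_sym (negbTE (z_notin_x le_kr)).
- by move/eqP; rewrite (negbTE (z_notin_x le_lr)).
- by lia.
Qed.

Lemma path_xz_iota_from m n rest : m < n <= r.+1 ->
  path (relpre xz a) m (index_iota m.+1 n ++ rest) = path (relpre xz a) n.-1 rest.
Proof.
case/andP=> lt_mn le_nr; apply: path_index_iota_from => // k _ lt_kn.
by rewrite /xz !ifT; [apply: x_arc | |]; lia.
Qed.

Lemma path_xz_iota h m n rest : m < n <= r.+1 ->
  path (relpre xz a) h (index_iota m n ++ rest) =
    a (xz h) (xz m) && path (relpre xz a) n.-1 rest.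
Proof. by move=> mnr; rewrite index_iota_cons /= ?path_xz_iota_from //; lia. Qed.

Lemma xz_index_iota_set :
  [set y | y \in map xz (index_iota 0 r.+2)] = z |: [set x (val i) | i : 'I_r.+1].
Proof.
apply/setP=> y; rewrite in_set in_setU1.
apply/mapP/predU1P => [[k] | [-> | /imsetP[i _ ->]]].
- move=> _ ->; rewrite /xz; case: (leqP k r) => [le_kr | _]; last by left.
  by right; apply/imsetP; exists (Ordinal (leq_ltn_trans le_kr (ltnSn r))).
- by exists r.+1; [rewrite mem_index_iota ltnSn | rewrite /xz ltnn].
- have le_ir : val i <= r := ltn_ord i.
  by exists (val i); [rewrite mem_index_iota ltnS leqW | rewrite /xz le_ir].
Qed.

Lemma z_absorbable_from_indices l :
    perm_eq (0 :: l) (index_iota 0 r.+2) -> path (relpre xz a) 0 l -> last 0 l = r ->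
  z_absorbable.
Proof.
move=> perm_l path_l last_l; have xz0 : xz 0 = x 0 by [].
exists (map xz l); rewrite -xz0 -map_cons; split.
- apply/andP; split; first by rewrite path_map.
  rewrite map_inj_in_uniq ?(perm_uniq perm_l) ?iota_uniq // => k k'.
  rewrite !(perm_mem perm_l) !mem_index_iota => ? ?; apply: xz_inj; rewrite inE; lia.
- by rewrite last_map last_l /xz leqnn.
- by have := perm_size perm_l; rewrite size_map size_iota => -[].
- rewrite -xz_index_iota_set; apply/setP=> y.
  by rewrite !in_set (perm_mem (perm_map xz perm_l)).
Qed.

Variables (alpha i j : nat).
Hypothesis x_to_z : forall k, alpha < k <= r -> a (x k) z.
Hypothesis z_to_x : forall k, k <= alpha -> a z (x k).
Hypothesis lt_i_alpha : i < alpha.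
Hypothesis xi_to_xj : a (x i) (x j).

Lemma z_absorbable_reroute s t :
    alpha <= s -> s < j < t -> t <= r -> a (x s) (x t) ->
    path (relpre xz a) t.-1 (index_iota s.+1 j ++ [:: r.+1]) ->
  z_absorbable.
Proof.
move=> le_as /andP[lt_sj lt_jt] le_tr xs_to_xt detour.
apply: (@z_absorbable_from_indices (index_iota 1 i.+1 ++ index_iota j t ++
  (index_iota s.+1 j ++ [:: r.+1]) ++ index_iota i.+1 s.+1 ++ index_iota t r.+1)).
- have -> : index_iota 0 r.+2 = index_iota 0 i.+1 ++ index_iota i.+1 s.+1 ++
      index_iota s.+1 j ++ index_iota j t ++ index_iota t r.+1 ++ [:: r.+1].
    have <- : index_iota r.+1 r.+2 = [:: r.+1] by rewrite /index_iota subSnn.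
    by rewrite !index_iota_cat //; lia.
  rewrite -cat_cons -index_iota_cons //.
  by apply/permP => P; rewrite !count_cat /=; lia.
- rewrite path_xz_iota_from; last lia.
  rewrite path_xz_iota; last lia.
  rewrite cat_path detour last_cat /= path_xz_iota; last lia.
  rewrite -[index_iota t r.+1]cats0 path_xz_iota; last lia.
  rewrite /xz ltnn !ifT; try lia.
  by rewrite xi_to_xj xs_to_xt z_to_x.
- by rewrite !catA last_cat last_index_iota //; lia.
Qed.

Lemma detour_to_z s t :
    alpha <= s -> s < j < t -> t <= r -> j = s.+1 \/ a (x t.-1) (x s.+1) ->
  path (relpre xz a) t.-1 (index_iota s.+1 j ++ [:: r.+1]).
Proof.
move=> le_as /andP[lt_sj lt_jt] le_tr.
have [-> _ | ne_js] := eqVneq j s.+1.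
  by rewrite /index_iota subnn /= /xz ltnn ifT ?x_to_z //; lia.
case=> [/eqP | back]; first by rewrite (negbTE ne_js).
rewrite path_xz_iota /=; last lia.
by rewrite /xz ltnn !ifT ?back ?x_to_z //; lia.
Qed.

Lemma z_absorbable_of_arc s t :
    tournament a -> alpha <= s -> s < j <= s + (t - s)./2 -> t <= r ->
    a (x s) (x t) ->
  z_absorbable.
Proof.
move=> [_ tourn]; have [d lt_js_d] := ubnP (j - s).
elim: d s t lt_js_d => // d IHd s t lt_js_d le_as /andP[lt_sj le_j_half] le_tr.
move=> xs_to_xt.
have lt_jt : j < t by lia.
have reroute : j = s.+1 \/ a (x t.-1) (x s.+1) -> z_absorbable.
  move=> detour; have lt_sjt : s < j < t by rewrite lt_sj.
  exact: z_absorbable_reroute le_as lt_sjt le_tr xs_to_xt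
    (detour_to_z le_as lt_sjt le_tr detour).
have [eq_js | ne_js] := eqVneq j s.+1; first by apply: reroute; left.
have [back | forth] := boolP (a (x t.-1) (x s.+1)); first by apply: reroute; right.
have ne_x : x s.+1 != x t.-1 by apply: contra_neq (x_inj _ _) _; rewrite ?inE; lia.
apply: (IHd s.+1 t.-1); try lia.
by rewrite tourn // (negbTE forth).
Qed.

End Rerouting.

Theorem lemma3p4 (T : finType) (a : rel T) (r : nat) (x : nat -> T) (z : T)
    (alpha s t : nat) :
  tournament a ->
  (* P = x_0 x_1 ... x_r is a path of length r *)
  {in [pred i | i <= r] &, injective x} ->
  (forall i, i < r -> a (x i) (x i.+1)) ->
  (* z is not on P *)
  (forall i, i <= r -> z != x i) ->
  2 <= alpha -> alpha <= r - 3 ->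
  (forall i, alpha < i <= r -> a (x i) z) ->
  (forall i, i <= alpha -> a z (x i)) ->
  (* no (x_0, x_r)-path of length r+1 with vertex set {z} ∪ V(P) *)
  ~ (exists q : seq T,
       [/\ dpath a (x 0 :: q), last (x 0) q = x r, size q = r.+1 &
           [set y | y \in x 0 :: q] = z |: [set x (val i) | i : 'I_r.+1]]) ->
  alpha <= s -> s <= r - 2 -> s + 2 <= t -> t <= r ->
  a (x s) (x t) ->
  forall i j, i < alpha -> s < j <= s + (t - s)./2 -> ~~ a (x i) (x j).
Proof.
move=> tour_a x_inj x_arc z_notin_x _ _ x_to_z z_to_x no_absorb
  le_as _ _ le_tr xs_to_xt i j lt_i_alpha j_range.
apply/negP => xi_to_xj; apply: no_absorb.
apply: (z_absorbable_of_arc x_inj x_arc z_notin_x x_to_z z_to_x lt_i_alpha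
  xi_to_xj tour_a le_as j_range le_tr xs_to_xt).
Qed.
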